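(* Let $(A,\cdot,\circ)$ be a skew brace such that $A = B\cdot C$ (i.e. every element of $A$ is of the form $bc$ with $b\in B$, $c\in C$) for some sub-skew braces $B$ and $C$ satisfying all of the following: (1) $B$ and $C$ are trivial skew braces; (2) $B$ and $C$ are normal subgroups of $(A,\cdot)$; (3) $B$ and $C$ are left ideals in $A$. Then $A^{(3)} := A'*A = 1$, where $A'=A*A$; that is, $A$ is right nilpotent of index at most $3$.
   Context: A skew brace is a set $A$ with two group operations $\cdot$ (often written by juxtaposition) and $\circ$ such that $a\circ(bc) = (a\circ b)\,a^{-1}\,(a\circ c)$ for all $a,b,c\in A$. The two groups have the same identity $1$; $a^{-1}$ denotes the inverse of $a$ in $(A,\cdot)$ and $\overline{a}$ its inverse in $(A,\circ)$. Define $a*b = a^{-1}(a\circ b)b^{-1}$. For subsets $X,Y\subseteq A$, $X*Y$ denotes the subgroup of $(A,\cdot)$ generated by all $x*y$ with $x\in X$, $y\in Y$. A sub-skew brace is a subset that is a subgroup of both $(A,\cdot)$ and $(A,\circ)$. A skew brace (or sub-skew brace) $B$ is trivial if $a\circ b = ab$ for all $a,b\in B$. A subgroup $I$ of $(A,\cdot)$ is a left ideal in $A$ if $A*I\subseteq I$, and a right ideal in $A$ if $I*A\subseteq I$. *)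

Section SkewBrace.
Context {T : Type}.

Definition is_group (one : T) (mul : T -> T -> T) (inv : T -> T) : Prop :=
  (forall a b c, mul a (mul b c) = mul (mul a b) c) /\
  (forall a, mul one a = a) /\ (forall a, mul a one = a) /\
  (forall a, mul (inv a) a = one) /\ (forall a, mul a (inv a) = one).

Definition is_skew_brace (one : T) (dot : T -> T -> T) (inv : T -> T)
    (circ : T -> T -> T) (cinv : T -> T) : Prop :=
  is_group one dot inv /\ is_group one circ cinv /\
  (forall a b c, circ a (dot b c) = dot (dot (circ a b) (inv a)) (circ a c)).

Variables (one : T) (dot : T -> T -> T) (inv : T -> T)
          (circ : T -> T -> T) (cinv : T -> T).

Definition star (a b : T) : T := dot (inv a) (dot (circ a b) (inv b)).

Definition subgroup (P : T -> Prop) : Prop :=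
  P one /\ (forall a b, P a -> P b -> P (dot a b)) /\ (forall a, P a -> P (inv a)).

Definition circ_subgroup (P : T -> Prop) : Prop :=
  P one /\ (forall a b, P a -> P b -> P (circ a b)) /\ (forall a, P a -> P (cinv a)).

Definition gen (X : T -> Prop) : T -> Prop :=
  fun z => forall P, subgroup P -> (forall x, X x -> P x) -> P z.

Definition starS (X Y : T -> Prop) : T -> Prop :=
  gen (fun z => exists x y, X x /\ Y y /\ z = star x y).

Definition setT : T -> Prop := fun _ => True.

Definition sub_skew_brace (B : T -> Prop) : Prop := subgroup B /\ circ_subgroup B.

Definition trivial_sub (B : T -> Prop) : Prop :=
  forall a b, B a -> B b -> circ a b = dot a b.

Definition normal_dot (B : T -> Prop) : Prop :=
  subgroup B /\ (forall a b, B b -> B (dot (dot a b) (inv a))).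

Definition left_ideal (I : T -> Prop) : Prop :=
  subgroup I /\ (forall z, starS setT I z -> I z).

Definition A_prime : T -> Prop := starS setT setT.
Definition A_3 : T -> Prop := starS A_prime setT.

End SkewBrace.

From Pilot Require Import Defs.

(* Write λ_a(x) = a⁻¹(a ∘ x).  In any skew brace λ is an action
   of (A, ∘) on (A, ·) by automorphisms, a ∘ x = a λ_a(x) and a * x = λ_a(x) x⁻¹.
   Its kernel K = {z | λ_z = id} is a subgroup of (A, ·) on which ∘ and · agree,
   and K * A = 1.  Hence A^(3) = A' * A = 1 as soon as every generator a * x of
   A' lies in K, which is what the hypotheses on B and C give:
   - trivial sub-braces act trivially on themselves, and left ideals are
     λ-invariant;
   - for c ∈ C and b ∈ B, the "defect" λ_c(b) b⁻¹ acts trivially on B and on C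
     (lemma [defect_fixes]); as A = BC, it lies in K, and symmetrically so does
     λ_b(c) c⁻¹ for b ∈ B, c ∈ C;
   - writing a = b ∘ c' and x = b' c', the element a * x factors as a product of
     two such defects and of a commutator lying in B ∩ C ⊆ K. *)

Section GroupFacts.
Context {T : Type} {one : T} {mul : T -> T -> T} {inv : T -> T}.
Hypothesis G : is_group one mul inv.

Lemma mulA a b c : mul a (mul b c) = mul (mul a b) c.
Proof. exact (proj1 G a b c). Qed.

Lemma mul1l a : mul one a = a.
Proof. exact (proj1 (proj2 G) a). Qed.

Lemma mul1r a : mul a one = a.
Proof. exact (proj1 (proj2 (proj2 G)) a). Qed.

Lemma mulVl a : mul (inv a) a = one.
Proof. exact (proj1 (proj2 (proj2 (proj2 G))) a). Qed.

Lemma mulVr a : mul a (inv a) = one.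
Proof. exact (proj2 (proj2 (proj2 (proj2 G))) a). Qed.

Lemma mulKl a x : mul (inv a) (mul a x) = x.
Proof. rewrite mulA, mulVl, mul1l. reflexivity. Qed.

Lemma mulKr a x : mul a (mul (inv a) x) = x.
Proof. rewrite mulA, mulVr, mul1l. reflexivity. Qed.

Lemma inv_uniq a b : mul a b = one -> b = inv a.
Proof. intros Hab. rewrite <- (mulKl a b), Hab, mul1r. reflexivity. Qed.

Lemma inv1 : inv one = one.
Proof. symmetry. apply inv_uniq, mul1l. Qed.

Lemma invK a : inv (inv a) = a.
Proof. symmetry. apply inv_uniq, mulVl. Qed.

Lemma invM a b : inv (mul a b) = mul (inv b) (inv a).
Proof.
  symmetry. apply inv_uniq.
  rewrite <- mulA, (mulA b), mulVr, mul1l, mulVr. reflexivity.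
Qed.

End GroupFacts.

Section SkewBrace.
Variables (T : Type) (one : T) (dot : T -> T -> T) (inv : T -> T)
          (circ : T -> T -> T) (cinv : T -> T).
Hypothesis Hbrace : is_skew_brace one dot inv circ cinv.

Local Infix "·" := dot (at level 40, left associativity).
Local Infix "∘" := circ (at level 38, left associativity).
Local Notation "x ⁻¹" := (inv x) (at level 2, format "x ⁻¹").
Local Notation star := (Defs.star dot inv circ).
Local Notation subgroup := (Defs.subgroup one dot inv).
Local Notation normal_dot := (Defs.normal_dot one dot inv).
Local Notation trivial_sub := (Defs.trivial_sub dot circ).
Local Notation left_ideal := (Defs.left_ideal one dot inv circ).

Lemma dot_group : is_group one dot inv.
Proof. exact (proj1 Hbrace). Qed.

Lemma circ_group : is_group one circ cinv.
Proof. exact (proj1 (proj2 Hbrace)). Qed.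

Lemma brace_law a b c : a ∘ (b · c) = a ∘ b · a⁻¹ · a ∘ c.
Proof. exact (proj2 (proj2 Hbrace) a b c). Qed.

Definition lam (a x : T) : T := a⁻¹ · a ∘ x.

Definition lam_kernel (z : T) : Prop := forall x, lam z x = x.

Definition lam_invariant (X : T -> Prop) : Prop := forall a x, X x -> X (lam a x).

Lemma circ_lam a x : a ∘ x = a · lam a x.
Proof. unfold lam. rewrite (mulKr dot_group). reflexivity. Qed.

Lemma lam_dot a x y : lam a (x · y) = lam a x · lam a y.
Proof. unfold lam. rewrite brace_law, <- !(mulA dot_group). reflexivity. Qed.

Lemma lam_circ a b x : lam (a ∘ b) x = lam a (lam b x).
Proof.
  unfold lam at 1. rewrite <- (mulA circ_group), (circ_lam b x), brace_law.
  rewrite <- !(mulA dot_group), (mulKl dot_group). reflexivity.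
Qed.

Lemma lam_one x : lam one x = x.
Proof. unfold lam. rewrite (inv1 dot_group), (mul1l dot_group), (mul1l circ_group). reflexivity. Qed.

Lemma star_lam a x : star a x = lam a x · x⁻¹.
Proof. unfold Defs.star, lam. rewrite (mulA dot_group). reflexivity. Qed.

Lemma kernel_circ z w : lam_kernel z -> z ∘ w = z · w.
Proof. intros Hz. rewrite circ_lam, Hz. reflexivity. Qed.

Lemma kernel_dot z w : lam_kernel z -> lam_kernel w -> lam_kernel (z · w).
Proof. intros Hz Hw x. rewrite <- kernel_circ, lam_circ, Hw, Hz by exact Hz. reflexivity. Qed.

Lemma kernel_inv z : lam_kernel z -> lam_kernel z⁻¹.
Proof.
  intros Hz x.
  assert (Ezz : z ∘ z⁻¹ = one) by (rewrite kernel_circ by exact Hz; apply (mulVr dot_group)).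
  rewrite <- (Hz (lam z⁻¹ x)), <- lam_circ, Ezz, lam_one. reflexivity.
Qed.

Lemma kernel_subgroup : subgroup lam_kernel.
Proof. split; [exact lam_one | split; [exact kernel_dot | exact kernel_inv]]. Qed.

Lemma kernel_star a x : lam_kernel a -> star a x = one.
Proof. intros Ha. rewrite star_lam, Ha, (mulVr dot_group). reflexivity. Qed.

Lemma A3_trivial_of_kernel :
  (forall a x, lam_kernel (star a x)) ->
  forall z, A_3 one dot inv circ z -> z = one.
Proof.
  intros Hstar z Hz. apply Hz.
  - split; [reflexivity | split].
    + intros a b -> ->. apply (mul1l dot_group).
    + intros a ->. apply (inv1 dot_group).
  - intros w [a [x [Ha [_ ->]]]]. apply kernel_star.
    apply Ha; [exact kernel_subgroup |].
    intros u [b [y [_ [_ ->]]]]. apply Hstar.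
Qed.

Lemma left_ideal_lam_invariant I : left_ideal I -> lam_invariant I.
Proof.
  intros [[_ [Imul _]] Istar] a x Hx.
  assert (Hs : I (star a x)).
  { apply Istar. intros P _ HP. apply HP. exists a, x. repeat split; assumption. }
  rewrite star_lam in Hs.
  rewrite <- (mul1r dot_group (lam a x)), <- (mulVl dot_group x), (mulA dot_group).
  exact (Imul _ _ Hs Hx).
Qed.

Lemma trivial_lam X b x : trivial_sub X -> X b -> X x -> lam b x = x.
Proof. intros tX Hb Hx. unfold lam. rewrite tX, (mulKl dot_group) by assumption. reflexivity. Qed.

Section Defect.
Variables B C : T -> Prop.
Hypotheses (nB : normal_dot B) (tB : trivial_sub B) (lB : lam_invariant B).
Hypotheses (nC : normal_dot C) (tC : trivial_sub C) (lC : lam_invariant C).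

Lemma lam_mul_meet y d c : B y -> B d -> C d -> C c -> lam (y · d) c = lam y c.
Proof.
  intros Hy HdB HdC Hc.
  rewrite <- tB, lam_circ, (trivial_lam C d c) by assumption. reflexivity.
Qed.

Lemma lam_agree c1 b c : C c1 -> B b -> C c -> lam b c = lam (lam c1 b) c.
Proof.
  intros Hc1 Hb Hc.
  destruct nB as [[_ [Bmul Binv]] Bconj].
  destruct nC as [[_ [Cmul Cinv]] Cconj].
  set (y := lam c1 b).
  assert (Hy : B y) by (apply lB; assumption).
  set (b3 := c1 · y · c1⁻¹).
  assert (Hb3 : B b3) by (apply Bconj; assumption).
  (* c1 ∘ b = c1 y = b3 c1 = b3 ∘ c4 with c4 ∈ C, and C acts trivially on C. *)
  set (c4 := lam b3⁻¹ c1).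
  assert (Hc4 : C c4) by (apply lC; assumption).
  assert (Ecirc : c1 ∘ b = b3 ∘ c4).
  { rewrite (circ_lam c1), (circ_lam b3). unfold c4.
    rewrite <- lam_circ, (tB b3 b3⁻¹), (mulVr dot_group), lam_one by auto.
    unfold b3. rewrite <- !(mulA dot_group), (mulVl dot_group), (mul1r dot_group).
    reflexivity. }
  assert (Eb3 : lam b c = lam b3 c).
  { rewrite <- (trivial_lam C c1 (lam b c)), <- lam_circ, Ecirc, lam_circ,
      (trivial_lam C c4 c) by auto.
    reflexivity. }
  (* b3 = y d with d = y⁻¹ c1 y c1⁻¹ ∈ B ∩ C. *)
  assert (Ed : b3 = y · (y⁻¹ · b3)) by (rewrite (mulKr dot_group); reflexivity).
  assert (HdC : C (y⁻¹ · b3)).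
  { replace (y⁻¹ · b3) with (y⁻¹ · c1 · y⁻¹⁻¹ · c1⁻¹).
    - apply Cmul; [apply Cconj |]; auto.
    - unfold b3. rewrite (invK dot_group), <- !(mulA dot_group). reflexivity. }
  rewrite Eb3, Ed, lam_mul_meet by auto. reflexivity.
Qed.

Lemma defect_fixes c1 b c :
  C c1 -> B b -> C c -> lam (lam c1 b · b⁻¹) c = c.
Proof.
  intros Hc1 Hb Hc.
  destruct nB as [[_ [Bmul Binv]] _].
  assert (Hy : B (lam c1 b)) by (apply lB; assumption).
  rewrite <- tB, lam_circ, <- (lam_agree c1 b), <- lam_circ, tB,
    (mulVr dot_group), lam_one by auto.
  reflexivity.
Qed.

End Defect.

Section Factorization.
Variables B C : T -> Prop.
Hypothesis Hfac : forall a, exists b c, B b /\ C c /\ a = b · c.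
Hypotheses (nB : normal_dot B) (tB : trivial_sub B) (lB : lam_invariant B).
Hypotheses (nC : normal_dot C) (tC : trivial_sub C) (lC : lam_invariant C).

(* Since A = BC and each λ_z is an endomorphism, acting trivially on B and on
   C means lying in the kernel. *)
Lemma kernel_of_factors z :
  (forall b, B b -> lam z b = b) -> (forall c, C c -> lam z c = c) -> lam_kernel z.
Proof.
  intros HB HC x. destruct (Hfac x) as [b [c [Hb [Hc ->]]]].
  rewrite lam_dot, HB, HC by assumption. reflexivity.
Qed.

Lemma meet_kernel d : B d -> C d -> lam_kernel d.
Proof.
  intros HdB HdC. apply kernel_of_factors; intros.
  - apply (trivial_lam B); assumption.
  - apply (trivial_lam C); assumption.
Qed.

Lemma defect_kernel_CB c1 b : C c1 -> B b -> lam_kernel (lam c1 b · b⁻¹).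
Proof.
  intros Hc1 Hb. destruct nB as [[_ [Bmul Binv]] _].
  apply kernel_of_factors; intros.
  - apply (trivial_lam B); auto.
  - apply (defect_fixes B C); assumption.
Qed.

Lemma defect_kernel_BC b c2 : B b -> C c2 -> lam_kernel (lam b c2 · c2⁻¹).
Proof.
  intros Hb Hc2. destruct nC as [[_ [Cmul Cinv]] _].
  apply kernel_of_factors; intros.
  - apply (defect_fixes C B); assumption.
  - apply (trivial_lam C); auto.
Qed.

Lemma star_in_kernel a x : lam_kernel (star a x).
Proof.
  destruct nB as [[_ [Bmul Binv]] Bconj].
  destruct nC as [[_ [Cmul Cinv]] Cconj].
  destruct (Hfac a) as [b [c [Hb [Hc ->]]]].
  destruct (Hfac x) as [b2 [c2 [Hb2 [Hc2 ->]]]].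
  (* b c = b ∘ c1 with c1 = λ_{b⁻¹}(c) ∈ C. *)
  set (c1 := lam b⁻¹ c).
  assert (Hc1 : C c1) by (apply lC; assumption).
  assert (Ea : b · c = b ∘ c1).
  { rewrite circ_lam. unfold c1.
    rewrite <- lam_circ, (tB b b⁻¹), (mulVr dot_group), lam_one by auto.
    reflexivity. }
  rewrite Ea, star_lam, lam_dot, !lam_circ,
    (trivial_lam B b (lam c1 b2)), (trivial_lam C c1 c2) by auto.
  set (y := lam c1 b2). set (y' := lam b c2). set (v := y' · c2⁻¹).
  (* a * x = (y b2⁻¹) · v · v⁻¹ b2 v b2⁻¹: two defects and an element of B ∩ C. *)
  assert (Efactor : y · y' · (b2 · c2)⁻¹ = y · b2⁻¹ · (v · (v⁻¹ · (b2 · (v · b2⁻¹))))).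
  { unfold v. rewrite !(invM dot_group), (invK dot_group), <- !(mulA dot_group).
    rewrite (mulKl dot_group), (mulKr dot_group), (mulKl dot_group). reflexivity. }
  assert (Hv : C v) by (unfold v, y'; auto).
  rewrite Efactor.
  apply kernel_dot; [apply defect_kernel_CB; assumption |].
  apply kernel_dot; [apply defect_kernel_BC; assumption |].
  apply meet_kernel.
  - replace (v⁻¹ · (b2 · (v · b2⁻¹))) with (v⁻¹ · b2 · v⁻¹⁻¹ · b2⁻¹).
    + apply Bmul; [apply Bconj |]; auto.
    + rewrite (invK dot_group), <- !(mulA dot_group). reflexivity.
  - apply Cmul; [apply Cinv; assumption |].
    rewrite (mulA dot_group). apply Cconj; assumption.
Qed.

End Factorization.

End SkewBrace.

Theorem theorem1p4 (T : Type) (one : T) (dot : T -> T -> T) (inv : T -> T)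
    (circ : T -> T -> T) (cinv : T -> T) (B C : T -> Prop) :
  is_skew_brace one dot inv circ cinv ->
  sub_skew_brace one dot inv circ cinv B ->
  sub_skew_brace one dot inv circ cinv C ->
  (forall a, exists b c, B b /\ C c /\ a = dot b c) ->
  trivial_sub dot circ B -> trivial_sub dot circ C ->
  normal_dot one dot inv B -> normal_dot one dot inv C ->
  left_ideal one dot inv circ B -> left_ideal one dot inv circ C ->
  forall z, A_3 one dot inv circ z -> z = one.
Proof.
  intros Hbrace _ _ Hfac tB tC nB nC iB iC.
  apply (A3_trivial_of_kernel T one dot inv circ cinv Hbrace).
  intros a x. apply (star_in_kernel T one dot inv circ cinv Hbrace B C Hfac);
    try apply (left_ideal_lam_invariant T one dot inv circ cinv Hbrace);
    assumption.
Qed.
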